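(* The matrix $L_n$ satisfies $L_n\ge0$ entrywise and $L_n^\top\varphi_n<\varphi_n$ entrywise; consequently its spectral radius is $<1$, $\mathrm I_n-L_n$ is a nonsingular $M$-matrix and $(\mathrm I_n-L_n)^{-1}\ge0$ entrywise. Set $u_n=(\mathrm I_n-L_n)^{-1}V_n$, $v_n=(\mathrm I_n-L_n)^{-1}U_n$ and $\vartheta_n^\star=-\frac{\mathbf 1_n^\top v_n}{\mathbf 1_n^\top u_n}$ (with $\mathbf 1_n^\top u_n\neq0$). Then the unique maximiser $(\bar z_n^Q,\bar z_n^S)$ of $g$ on $\mathfrak F_n$ is given by $$\bar z_n^S=u_n\vartheta_n^\star+v_n,\qquad \bar z_n^{Q,i,j}=p_{i,j}\Big(n\bar\mu_{j,n}+\frac1{c_i}\mathbf 1_{\{i=j\}}-\frac{\gamma_i\sigma}{\sqrt n}\bar z_n^{S,i}\rho_j\nu_j\Big),$$ where $\bar\mu_{j,n}=\frac{1}{n\Theta_{j,n}}\Big(1-\zeta_j-\frac{\sigma}{\sqrt n}a_j\bar z_n^{S,j}\Big)$.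
   Context: Fix $n\ge1$, $\sigma>0$, and for each $i$: $c_i>0$, $\gamma_i>0$, $\nu_i>0$, $\rho_i\in(-1,1)$; $\rho=(\rho_i)$. Variables $z^Q=(z^{Q,i,j})\in\mathbb{R}^{n\times n}$ ($i$ row, $j$ column), $z^S\in\mathbb{R}^n$. Define $$g(z^Q,z^S)=-\frac1n\sum_{i=1}^n\Big(\frac{(z^{Q,i,i})^2}{2c_i}+\frac{\gamma_i}{2}\sum_{j=1}^n\nu_j^2(z^{Q,i,j})^2+\frac{\gamma_i\sigma^2}{2}(z^{S,i})^2+\frac{\gamma_i\sigma}{\sqrt n}z^{S,i}\sum_{j=1}^n\rho_j\nu_jz^{Q,i,j}\Big)+\frac1n\sum_{i=1}^n\frac{z^{Q,i,i}}{c_i},$$ and $\mathfrak F_n=\{(z^Q,z^S):\sum_{i=1}^nz^{Q,i,j}=1\ \forall j,\ \sum_{k=1}^nz^{S,k}=0\}$. Define $p_{i,j}=\frac{1}{\gamma_i\nu_j^2}$ for $j\ne i$ and $p_{i,i}=\frac{1}{\gamma_i\nu_i^2+1/c_i}$; for each $j$: $\Theta_{j,n}=\sum_{i=1}^np_{i,j}$, $\zeta_j=p_{j,j}/c_j\in(0,1)$, $a_j=\rho_j\zeta_j/\nu_j$, $w_{j,n}=\frac{1}{n\Theta_{j,n}}$; for each $k$: $M_{k,j}=\rho_j\nu_jp_{k,j}$, $\upsilon_{k,n}=\sum_{j=1}^n\rho_j^2\nu_j^2p_{k,j}$, $\varphi_{k,n}=1-\frac{\gamma_k}{n}\upsilon_{k,n}$,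 $\varphi_n=(\varphi_{k,n})_k$. Define the $n\times n$ matrix $L_n$ by $(L_n)_{k,j}=\frac{1}{\varphi_{k,n}}w_{j,n}a_jM_{k,j}=\frac{\rho_j^2\zeta_jp_{k,j}}{n\varphi_{k,n}\Theta_{j,n}}$, and vectors $V_n,U_n\in\mathbb{R}^n$ by $(V_n)_k=\frac{n}{\gamma_k\sigma^2\varphi_{k,n}}$ and $(U_n)_k=-\frac{1}{\varphi_{k,n}}(C_{k,n}+r_{k,n})$, where $C_{k,n}=\frac{1}{\sigma\sqrt n}\sum_{j=1}^n\frac{1-\zeta_j}{\Theta_{j,n}}M_{k,j}$ and $r_{k,n}=\frac{1}{\sigma\sqrt n}\frac{\rho_k\nu_k}{c_k}p_{k,k}$. *)

(* R is an arbitrary real closed field (covers the reals);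
   eigenvalues are taken in the algebraic closure R[i] = complex R. *)
From HB Require Import structures.
From mathcomp Require Import all_boot all_order all_algebra.
From mathcomp Require Import complex.
Set Implicit Arguments. Unset Strict Implicit. Unset Printing Implicit Defensive.
Import Order.TTheory GRing.Theory Num.Theory.
Local Open Scope ring_scope.

Section Model.
Variable R : rcfType.
Variable n : nat.
Variable sigma : R.
Variables (c gam nu rho : 'I_n -> R).

Local Notation sqn := (Num.sqrt (n%:R : R)).

(* objective g(z^Q, z^S); zQ i j = z^{Q,i,j} (i row, j column) *)
Definition gobj (zQ : 'M[R]_n) (zS : 'cV[R]_n) : R :=
  - (1 / n%:R) * \sum_(i < n)
      ( zQ i i ^+ 2 / (2 * c i)
      + gam i / 2 * \sum_(j < n) nu j ^+ 2 * zQ i j ^+ 2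
      + gam i * sigma ^+ 2 / 2 * zS i 0 ^+ 2
      + gam i * sigma / sqn * zS i 0 * \sum_(j < n) rho j * nu j * zQ i j )
  + (1 / n%:R) * \sum_(i < n) zQ i i / c i.

Definition feasible (zQ : 'M[R]_n) (zS : 'cV[R]_n) : Prop :=
  (forall j : 'I_n, \sum_(i < n) zQ i j = 1) /\ \sum_(k < n) zS k 0 = 0.

Definition pcoef (i j : 'I_n) : R :=
  if i == j then 1 / (gam i * nu i ^+ 2 + 1 / c i) else 1 / (gam i * nu j ^+ 2).
Definition Theta (j : 'I_n) : R := \sum_(i < n) pcoef i j.
Definition zeta (j : 'I_n) : R := pcoef j j / c j.
Definition acoef (j : 'I_n) : R := rho j * zeta j / nu j.
Definition wcoef (j : 'I_n) : R := 1 / (n%:R * Theta j).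
Definition Mcoef (k j : 'I_n) : R := rho j * nu j * pcoef k j.
Definition upsilon (k : 'I_n) : R := \sum_(j < n) rho j ^+ 2 * nu j ^+ 2 * pcoef k j.
Definition phi (k : 'I_n) : R := 1 - gam k / n%:R * upsilon k.
Definition phivec : 'cV[R]_n := \col_k phi k.

Definition Lmat : 'M[R]_n :=
  \matrix_(k, j) (1 / phi k * wcoef j * acoef j * Mcoef k j).
Definition Vvec : 'cV[R]_n := \col_k (n%:R / (gam k * sigma ^+ 2 * phi k)).
Definition Cterm (k : 'I_n) : R :=
  1 / (sigma * sqn) * \sum_(j < n) (1 - zeta j) / Theta j * Mcoef k j.
Definition rterm (k : 'I_n) : R :=
  1 / (sigma * sqn) * (rho k * nu k / c k * pcoef k k).
Definition Uvec : 'cV[R]_n := \col_k (- (1 / phi k) * (Cterm k + rterm k)).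

End Model.

Definition eigenvalueC (R : rcfType) (m : nat) (B : 'M[R]_m) (lam : R[i]) : bool :=
  root (char_poly (map_mx (fun x : R => (x%:C)%C) B)) lam.

Definition spectral_radius_lt (R : rcfType) (m : nat) (B : 'M[R]_m) (s : R) : Prop :=
  forall lam : R[i], eigenvalueC B lam -> `|lam| < (s%:C)%C.

Definition entrywise_nonneg (R : rcfType) (m p : nat) (A : 'M[R]_(m, p)) : Prop :=
  forall i j, 0 <= A i j.

Definition nonsingular_Mmatrix (R : rcfType) (m : nat) (A : 'M[R]_m) : Prop :=
  exists (s : R) (B : 'M[R]_m),
    entrywise_nonneg B /\ A = s%:M - B /\ spectral_radius_lt B s.

(* If l y <= L y for a
   nonnegative y that is not zero, pairing with phi gives l (phi.y) <= (L^T phi).y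
   < phi.y, so l < 1.  Applied to moduli of complex eigenvectors this bounds the
   spectral radius of L by 1; applied with l = 1 to the negative part of x it shows
   that (I - L) x >= 0 forces x >= 0, whence I - L is invertible with a
   nonnegative inverse.

   The objective g is a concave quadratic.  The candidate satisfies the
   first-order conditions on the affine set F_n, with multipliers n mu_j for the
   column constraints on z^Q and n theta* for the constraint on z^S; the latter is
   exactly the linear system (I - L) z^S = theta* V + U.  Hence
   g(z + d) = g(z) - (1/n) sum_i q_i(d) for feasible directions d, where q_i is a
   sum of squares plus sigma^2 (d^S_i)^2 (1 - sum_j rho_j^2 / n), which is
   positive as soon as row i of d does not vanish. *)

From Pilot Require Import Defs.
From mathcomp Require Import all_boot all_order all_algebra.
From mathcomp Require Import complex.
From mathcomp Require Import ring.
Import Order.TTheory GRing.Theory Num.Theory.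
Set Implicit Arguments.
Unset Strict Implicit.
Unset Printing Implicit Defensive.
Local Open Scope ring_scope.

Section WeightedColumnSums.
Variables (F : numDomainType) (m : nat) (A : 'I_m -> 'I_m -> F) (w : 'I_m -> F).
Hypothesis w_gt0 : forall k, 0 < w k.
Hypothesis wA_lt : forall j, \sum_(k < m) w k * A k j < w j.

Lemma subeigenvalue_lt1 (y : 'I_m -> F) (l : F) (j0 : 'I_m) :
  (forall k, 0 <= y k) -> 0 < y j0 ->
  (forall k, l * y k <= \sum_(j < m) A k j * y j) -> l < 1.
Proof.
move=> y_ge0 y_j0 ly_le.
have wy_gt0 : 0 < \sum_(k < m) w k * y k.
  rewrite (bigD1 j0) //=; apply: ltr_pwDl; first exact: mulr_gt0.
  by apply: sumr_ge0 => k _; rewrite mulr_ge0 ?y_ge0 ?ltW.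
rewrite -(ltr_pM2r wy_gt0) mul1r mulr_sumr.
apply: (@le_lt_trans _ _ (\sum_(k < m) w k * \sum_(j < m) A k j * y j)).
  by apply: ler_sum => k _; rewrite mulrCA ler_wpM2l ?ly_le ?ltW.
have -> : \sum_(k < m) w k * \sum_(j < m) A k j * y j =
          \sum_(j < m) (\sum_(k < m) w k * A k j) * y j.
  under eq_bigr do rewrite mulr_sumr.
  rewrite exchange_big; apply: eq_bigr => j _ /=; rewrite mulr_suml.
  by apply: eq_bigr => k _; rewrite mulrA.
rewrite [X in X < _](bigD1 j0) // [X in _ < X](bigD1 j0) //=.
rewrite ltr_leD ?ltr_pM2r //; apply: ler_sum => k _.
by rewrite mulrC [w k * _]mulrC ler_wpM2l ?y_ge0 // ltW.
Qed.

End WeightedColumnSums.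

Section WeightedSubstochasticMatrix.
Variables (R : rcfType) (m : nat) (L : 'M[R]_m) (w : 'cV[R]_m).
Hypothesis L_ge0 : entrywise_nonneg L.
Hypothesis w_gt0 : forall k, 0 < w k 0.
Hypothesis trL_w_lt : forall k, (L^T *m w) k 0 < w k 0.

Local Notation IL := (1%:M - L).

Lemma weighted_colsum_lt j : \sum_(k < m) w k 0 * L k j < w j 0.
Proof.
suff -> : \sum_(k < m) w k 0 * L k j = (L^T *m w) j 0 by [].
by rewrite mxE; apply: eq_bigr => k _; rewrite !mxE mulrC.
Qed.

Lemma IL_mulmxE (x : 'cV[R]_m) k : (IL *m x) k 0 = x k 0 - \sum_(j < m) L k j * x j 0.
Proof. by rewrite mulmxBl mul1mx !mxE. Qed.

Lemma IL_monotone (x : 'cV[R]_m) :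
  (forall k, 0 <= (IL *m x) k 0) -> forall k, 0 <= x k 0.
Proof.
move=> ILx_ge0 k0; rewrite leNgt; apply/negP => x_k0.
pose y k := Num.max 0 (- x k 0).
have y_ge0 k : 0 <= y k by rewrite le_max lexx.
have y_k0 : 0 < y k0 by rewrite lt_max oppr_gt0 x_k0 orbT.
suff : (1 : R) < 1 by rewrite ltxx.
apply: (@subeigenvalue_lt1 _ _ L (fun k => w k 0) w_gt0 weighted_colsum_lt _ _ _ y_ge0 y_k0) => k.
rewrite mul1r /y; case: (leP 0 (- x k 0)) => [_ | _].
  have := ILx_ge0 k; rewrite IL_mulmxE subr_ge0 -lerN2 -sumrN => /le_trans; apply.
  by apply: ler_sum => j _; rewrite -mulrN ler_wpM2l ?le_max ?lexx ?orbT.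
by apply: sumr_ge0 => j _; rewrite mulr_ge0 ?L_ge0 ?le_max ?lexx.
Qed.

Lemma IL_unitmx : IL \in unitmx.
Proof.
rewrite unitmxE unitfE -det_tr; apply/negP => /det0P [v v_neq0 vIL0].
have ILv0 : IL *m v^T = 0 by rewrite -[IL]trmxK -trmx_mul vIL0 trmx0.
move/negP: v_neq0; apply; apply/eqP/matrixP => i j; rewrite ord1 mxE.
apply/le_anti/andP; split.
  have := @IL_monotone (- v^T) _ j; rewrite !mxE oppr_ge0; apply=> k.
  by rewrite mulmxN ILv0 oppr0 mxE.
have := @IL_monotone v^T _ j; rewrite mxE; apply=> k.
by rewrite ILv0 mxE.
Qed.

Lemma invmx_IL_ge0 : entrywise_nonneg (invmx IL).
Proof.
move=> i j.
have -> : invmx IL i j = (invmx IL *m delta_mx j (0 : 'I_1)) i 0 by rewrite -colE mxE.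
apply: IL_monotone => k.
by rewrite mulmxA mulmxV ?IL_unitmx // mul1mx mxE; case: (_ && _).
Qed.

Local Open Scope complex_scope.

Lemma spectral_radius_lt1 : spectral_radius_lt L 1.
Proof.
move=> lam; rewrite /eigenvalueC -eigenvalue_root_char.
set A := map_mx _ L => /eigenvalueP [v0 v0A v0_neq0].
have : \det (lam%:M - A)^T == 0.
  rewrite det_tr; apply/det0P; exists v0 => //.
  by rewrite mulmxBr v0A mul_mx_scalar subrr.
case/det0P=> v v_neq0; rewrite linearB /= tr_scalar_mx mulmxBr mul_mx_scalar.
move/eqP; rewrite subr_eq0 => /eqP vA.
have lam_v k : lam * v 0 k = \sum_(j < m) (L k j)%:C * v 0 j.
  move/matrixP: vA => /(_ 0 k); rewrite !mxE => ->.
  by apply: eq_bigr => j _; rewrite !mxE mulrC.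
have [j0 v_j0] : exists j0, v 0 j0 != 0.
  apply/existsP; move: v_neq0; apply: contraR; rewrite negb_exists => /forallP v_eq0.
  by apply/eqP/matrixP => i j; rewrite ord1 !mxE; apply/eqP/negPn/v_eq0.
(* The moduli of v form a nonnegative sub-eigenvector of L for |lam|. *)
have wC_gt0 k : 0 < (w k 0)%:C by rewrite ltcR.
have wLC_lt j : \sum_(k < m) (w k 0)%:C * (L k j)%:C < (w j 0)%:C.
  by under eq_bigr do rewrite -rmorphM; rewrite -rmorph_sum ltcR weighted_colsum_lt.
rewrite rmorph1.
apply: (@subeigenvalue_lt1 _ _ _ _ wC_gt0 wLC_lt (fun k => `|v 0 k|) _ j0)
  => // [|k].
  by rewrite normr_gt0.
rewrite -normrM lam_v; apply: le_trans (ler_norm_sum _ _ _) _.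
by apply: ler_sum => j _; rewrite normrM ger0_norm ?ler0c.
Qed.

Lemma IL_Mmatrix : nonsingular_Mmatrix IL.
Proof. by exists 1, L; split; last split; last exact: spectral_radius_lt1. Qed.

End WeightedSubstochasticMatrix.

Lemma sum_if_eq (V : nmodType) (I : finType) (i : I) (F : I -> V) :
  \sum_j (if i == j then F j else 0) = F i.
Proof. by rewrite -big_mkcond (big_pred1 i) // => j; rewrite /= eq_sym. Qed.

Create HintDb pos.
#[local] Hint Extern 1 (is_true (_ != 0)) => apply: lt0r_neq0 : pos.
#[local] Hint Extern 1 (is_true (0 < _ * _)) => apply: mulr_gt0 : pos.
#[local] Hint Extern 1 (is_true (0 < _ / _)) => apply: divr_gt0 : pos.
#[local] Hint Extern 1 (is_true (0 < _ + _)) => apply: addr_gt0 : pos.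
#[local] Hint Extern 1 (is_true (0 < _ ^+ _)) => apply: exprn_gt0 : pos.
#[local] Hint Extern 1 (is_true (0 < 1)) => apply: ltr01 : pos.
Ltac pos := repeat (apply/andP; split); auto 20 with pos.

Section Model.
Variables (R : rcfType) (n : nat) (sigma : R) (c gam nu rho : 'I_n -> R).
Hypothesis n_gt0 : (0 < n)%N.
Hypothesis sigma_gt0 : 0 < sigma.
Hypothesis c_gt0 : forall i, 0 < c i.
Hypothesis gam_gt0 : forall i, 0 < gam i.
Hypothesis nu_gt0 : forall i, 0 < nu i.
Hypothesis rho_bound : forall i, -1 < rho i < 1.
#[local] Hint Resolve sigma_gt0 c_gt0 gam_gt0 nu_gt0 : pos.

Local Notation p := (pcoef c gam nu).
Local Notation Theta := (Defs.Theta c gam nu).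
Local Notation zeta := (Defs.zeta c gam nu).
Local Notation phi := (Defs.phi c gam nu rho).
Local Notation L := (Lmat c gam nu rho).
Local Notation sqrtn := (Num.sqrt (n%:R : R)).

Lemma nR_gt0 : 0 < (n%:R : R).
Proof. by rewrite ltr0n. Qed.

Lemma sqrtn_gt0 : 0 < sqrtn.
Proof. by rewrite sqrtr_gt0 nR_gt0. Qed.

Lemma sqrtn_sqr : sqrtn ^+ 2 = n%:R.
Proof. by rewrite sqr_sqrtr ?ler0n. Qed.

Lemma pcoef_gt0 i j : 0 < p i j.
Proof. by rewrite /pcoef; case: eqP => _; pos. Qed.

#[local] Hint Resolve nR_gt0 sqrtn_gt0 pcoef_gt0 : pos.

Lemma gam_nu2_pcoef i j :
  gam i * nu j ^+ 2 * p i j = 1 - (if i == j then zeta j else 0).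
Proof.
by rewrite /Defs.zeta /pcoef; case: eqP => [<-|_]; rewrite ?eqxx; field; pos.
Qed.

Lemma Theta_gt0 j : 0 < Theta j.
Proof.
rewrite /Defs.Theta (bigD1 j) //=; apply: ltr_pwDl; first exact: pcoef_gt0.
by apply: sumr_ge0 => i _; exact: ltW (pcoef_gt0 _ _).
Qed.

Lemma zeta_ge0 j : 0 <= zeta j.
Proof. by rewrite /Defs.zeta divr_ge0 ?ltW ?pcoef_gt0. Qed.

Lemma zeta_lt1 j : zeta j < 1.
Proof.
have := gam_nu2_pcoef j j; rewrite eqxx => gpE.
have : 0 < gam j * nu j ^+ 2 * p j j by pos.
by rewrite gpE subr_gt0.
Qed.

Lemma sum_rho2_lt_n : \sum_(j < n) rho j ^+ 2 < n%:R.
Proof.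
have rho2_lt1 j : rho j ^+ 2 < 1.
  by rewrite -real_normK ?num_real // expr_lt1 // ltr_norml.
rewrite -[n in X in _ < X]card_ord -sumr_const (bigD1 (Ordinal n_gt0)) //=.
rewrite [X in _ < X](bigD1 (Ordinal n_gt0)) //=; apply: ltr_leD => //.
by apply: ler_sum => i _; exact: ltW.
Qed.

Lemma gam_upsilon i :
  gam i * upsilon c gam nu rho i = \sum_(j < n) rho j ^+ 2 - rho i ^+ 2 * zeta i.
Proof.
rewrite /upsilon mulr_sumr -(@sum_if_eq _ _ i (fun j => rho j ^+ 2 * zeta j)) -sumrB.
apply: eq_bigr => j _.
transitivity (rho j ^+ 2 * (gam i * nu j ^+ 2 * p i j)); first ring.
by rewrite gam_nu2_pcoef; case: eqP => _; ring.
Qed.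

Lemma phiE i : phi i = 1 - (\sum_(j < n) rho j ^+ 2 - rho i ^+ 2 * zeta i) / n%:R.
Proof. by rewrite /Defs.phi mulrAC gam_upsilon. Qed.

Lemma phi_gt i : rho i ^+ 2 * zeta i / n%:R < phi i.
Proof.
rewrite phiE -subr_gt0.
have -> : 1 - (\sum_(j < n) rho j ^+ 2 - rho i ^+ 2 * zeta i) / n%:R - rho i ^+ 2 * zeta i / n%:R
    = (n%:R - \sum_(j < n) rho j ^+ 2) / n%:R by field; pos.
by rewrite divr_gt0 ?subr_gt0 ?sum_rho2_lt_n ?nR_gt0.
Qed.

Lemma phi_gt0 i : 0 < phi i.
Proof.
by apply: le_lt_trans (phi_gt i); rewrite divr_ge0 ?ler0n // mulr_ge0 ?sqr_ge0 ?zeta_ge0.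
Qed.

#[local] Hint Resolve Theta_gt0 phi_gt0 : pos.

Lemma LmatE k j :
  L k j = rho j ^+ 2 * zeta j * p k j / (n%:R * phi k * Theta j).
Proof. by rewrite mxE /wcoef /acoef /Mcoef; field; pos. Qed.

Lemma Lmat_ge0 : entrywise_nonneg L.
Proof.
move=> k j; rewrite LmatE; apply: divr_ge0; last by apply: ltW; pos.
exact/mulr_ge0/ltW/pcoef_gt0/mulr_ge0/zeta_ge0/sqr_ge0.
Qed.

Lemma phivec_gt0 k : 0 < phivec c gam nu rho k 0.
Proof. by rewrite mxE phi_gt0. Qed.

Lemma trLmat_phivec j : (L^T *m phivec c gam nu rho) j 0 = rho j ^+ 2 * zeta j / n%:R.
Proof.
rewrite mxE (eq_bigr (fun k => rho j ^+ 2 * zeta j / (n%:R * Theta j) * p k j)).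
  by rewrite -mulr_sumr -/(Theta j); field; pos.
by move=> k _; rewrite !mxE /wcoef /acoef /Mcoef; field; pos.
Qed.

Lemma trLmat_phivec_lt k : (L^T *m phivec c gam nu rho) k 0 < phivec c gam nu rho k 0.
Proof. by rewrite trLmat_phivec mxE phi_gt. Qed.

Local Notation IL := (1%:M - L).
Local Notation V := (Vvec sigma c gam nu rho).
Local Notation U := (Uvec sigma c gam nu rho).

Lemma IL_unit : IL \in unitmx.
Proof. exact: IL_unitmx Lmat_ge0 phivec_gt0 trLmat_phivec_lt. Qed.

Definition usol : 'cV[R]_n := invmx IL *m V.
Definition vsol : 'cV[R]_n := invmx IL *m U.
Definition theta_star : R := - (\sum_(k < n) vsol k 0) / (\sum_(k < n) usol k 0).
Definition zS_star : 'cV[R]_n := theta_star *: usol + vsol.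
Definition mu_star (j : 'I_n) : R :=
  1 / (n%:R * Theta j) * (1 - zeta j - sigma / sqrtn * acoef c gam nu rho j * zS_star j 0).
Definition zQ_star : 'M[R]_n := \matrix_(i, j)
  (p i j * (n%:R * mu_star j + (if i == j then 1 / c i else 0)
            - gam i * sigma / sqrtn * zS_star i 0 * rho j * nu j)).

Lemma usol_gt0 k : 0 < usol k 0.
Proof.
have IL_usol : IL *m usol = V by rewrite mulmxA mulmxV ?IL_unit // mul1mx.
have V_gt0 j : 0 < V j 0 by rewrite mxE; pos.
have usol_ge0 : forall j, 0 <= usol j 0.
  by apply: (IL_monotone Lmat_ge0 phivec_gt0 trLmat_phivec_lt) => j; rewrite IL_usol ltW.
have := V_gt0 k; rewrite -IL_usol IL_mulmxE => /lt_le_trans; apply.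
by rewrite lerBlDr lerDl sumr_ge0 // => j _; rewrite mulr_ge0 ?Lmat_ge0.
Qed.

Lemma sum_usol_gt0 : 0 < \sum_(k < n) usol k 0.
Proof.
rewrite (bigD1 (Ordinal n_gt0)) //=; apply: ltr_pwDl; first exact: usol_gt0.
by apply: sumr_ge0 => k _; exact/ltW/usol_gt0.
Qed.

Lemma sum_zS_star : \sum_(k < n) zS_star k 0 = 0.
Proof.
have -> : \sum_(k < n) zS_star k 0 = theta_star * \sum_(k < n) usol k 0 + \sum_(k < n) vsol k 0.
  by rewrite mulr_sumr -big_split; apply: eq_bigr => k _; rewrite !mxE.
by rewrite /theta_star; field; rewrite gt_eqF ?sum_usol_gt0.
Qed.

Lemma zS_star_balance i :
  zS_star i 0 - \sum_(j < n) L i j * zS_star j 0 =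
    theta_star * (n%:R / (gam i * sigma ^+ 2 * phi i))
    - (Cterm sigma c gam nu rho i + rterm sigma c gam nu rho i) / phi i.
Proof.
rewrite -IL_mulmxE /zS_star mulmxDr -scalemxAr !mulmxA mulmxV ?IL_unit // !mul1mx.
by rewrite !mxE; field; pos.
Qed.

Lemma zQ_star_colsum j : \sum_(i < n) zQ_star i j = 1.
Proof.
have zQE i : zQ_star i j = p i j * (n%:R * mu_star j) + (if j == i then zeta j else 0)
    - sigma / sqrtn * rho j / nu j * (zS_star i 0 - (if j == i then zeta j * zS_star j 0 else 0)).
  by rewrite /zQ_star mxE /Defs.zeta /pcoef eqxx; have [<-|_] := eqVneq i j; field; pos.
rewrite (eq_bigr _ (fun i _ => zQE i)) sumrB big_split /= -mulr_suml -/(Theta j).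
rewrite -mulr_sumr sumrB !sum_if_eq sum_zS_star /mu_star /acoef.
by field; pos.
Qed.

Lemma rho_nu_zQ_star i :
  \sum_(j < n) rho j * nu j * zQ_star i j =
    sigma * sqrtn * (Cterm sigma c gam nu rho i + rterm sigma c gam nu rho i)
    - sigma / sqrtn * n%:R * phi i * \sum_(j < n) L i j * zS_star j 0
    - gam i * sigma / sqrtn * upsilon c gam nu rho i * zS_star i 0.
Proof.
have termE j : rho j * nu j * zQ_star i j =
    (1 - zeta j) / Theta j * Mcoef c gam nu rho i j
    - sigma / sqrtn * n%:R * phi i * (L i j * zS_star j 0)
    + (if i == j then rho i * nu i / c i * p i i else 0)
    - gam i * sigma / sqrtn * zS_star i 0 * (rho j ^+ 2 * nu j ^+ 2 * p i j).
  rewrite /zQ_star /mu_star !mxE /wcoef /acoef /Mcoef.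
  by have [<-|_] := eqVneq i j; field; pos.
rewrite (eq_bigr _ (fun j _ => termE j)) !sumrB !big_split /= sum_if_eq.
by rewrite sumrN -!mulr_sumr /Cterm /rterm /upsilon; field; pos.
Qed.

Definition qform (Q : 'M[R]_n) (S : 'cV[R]_n) (i : 'I_n) : R :=
  Q i i ^+ 2 / (2 * c i) + gam i / 2 * \sum_(j < n) nu j ^+ 2 * Q i j ^+ 2
  + gam i * sigma ^+ 2 / 2 * S i 0 ^+ 2
  + gam i * sigma / sqrtn * S i 0 * \sum_(j < n) rho j * nu j * Q i j.

Definition gsummand (Q : 'M[R]_n) (S : 'cV[R]_n) (i : 'I_n) : R := qform Q S i - Q i i / c i.

(* Partial derivatives of [gsummand Q S i] in [Q i j] and in [S i 0]. *)
Definition gradQ (Q : 'M[R]_n) (S : 'cV[R]_n) (i j : 'I_n) : R :=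
  (if i == j then (Q i i - 1) / c i else 0) + gam i * nu j ^+ 2 * Q i j
  + gam i * sigma / sqrtn * S i 0 * (rho j * nu j).

Definition gradS (Q : 'M[R]_n) (S : 'cV[R]_n) (i : 'I_n) : R :=
  gam i * sigma ^+ 2 * S i 0 + gam i * sigma / sqrtn * \sum_(j < n) rho j * nu j * Q i j.

Lemma gobjE Q S :
  gobj sigma c gam nu rho Q S = - (1 / n%:R) * \sum_(i < n) gsummand Q S i.
Proof. by rewrite /gobj /gsummand /qform sumrB; ring. Qed.

Lemma gsummandD Q S D E i :
  gsummand (Q + D) (S + E) i = gsummand Q S i + qform D E i
    + \sum_(j < n) gradQ Q S i j * D i j + gradS Q S i * E i 0.
Proof.
have sqrQD : \sum_(j < n) nu j ^+ 2 * (Q + D) i j ^+ 2 =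
    \sum_(j < n) nu j ^+ 2 * Q i j ^+ 2 + \sum_(j < n) nu j ^+ 2 * D i j ^+ 2
    + 2 * \sum_(j < n) nu j ^+ 2 * Q i j * D i j.
  by rewrite mulr_sumr -!big_split; apply: eq_bigr => j _ /=; rewrite mxE; ring.
have linQD : \sum_(j < n) rho j * nu j * (Q + D) i j =
    \sum_(j < n) rho j * nu j * Q i j + \sum_(j < n) rho j * nu j * D i j.
  by rewrite -big_split; apply: eq_bigr => j _ /=; rewrite mxE; ring.
have gradQD : \sum_(j < n) gradQ Q S i j * D i j =
    (Q i i - 1) / c i * D i i + gam i * \sum_(j < n) nu j ^+ 2 * Q i j * D i j
    + gam i * sigma / sqrtn * S i 0 * \sum_(j < n) rho j * nu j * D i j.
  rewrite -(sum_if_eq i (fun j => (Q i i - 1) / c i * D i j)) !mulr_sumr -!big_split.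
  by apply: eq_bigr => j _ /=; rewrite /gradQ; case: eqP => _; ring.
by rewrite /gsummand /qform sqrQD linQD gradQD /gradS !mxE; field; pos.
Qed.

Lemma gradQ_star i j : gradQ zQ_star zS_star i j = n%:R * mu_star j.
Proof.
rewrite /gradQ /zQ_star; have [<-|ne] := eqVneq i j; rewrite mxE /pcoef.
  by rewrite eqxx; field; pos.
by rewrite (negbTE ne); field; pos.
Qed.

Lemma gradS_star i : gradS zQ_star zS_star i = n%:R * theta_star.
Proof.
have upsilonE : upsilon c gam nu rho i = (1 - phi i) * n%:R / gam i.
  by rewrite /Defs.phi; field; pos.
rewrite /gradS rho_nu_zQ_star upsilonE.
have -> : \sum_(j < n) L i j * zS_star j 0 =
    zS_star i 0 - (zS_star i 0 - \sum_(j < n) L i j * zS_star j 0) by rewrite subKr.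
rewrite zS_star_balance.
(* Abstracting sqrt n lets field use sqrt n ^+ 2 = n. *)
move: sqrtn_sqr sqrtn_gt0; move: (Num.sqrt _) => s s2 s_gt0; rewrite -s2.
by field; pos.
Qed.

Lemma qform_sum_sqr D E i : qform D E i =
  D i i ^+ 2 / (2 * c i) + gam i / 2 *
    (\sum_(j < n) (nu j * D i j + sigma * E i 0 * rho j / sqrtn) ^+ 2
     + sigma ^+ 2 * E i 0 ^+ 2 * (1 - (\sum_(j < n) rho j ^+ 2) / n%:R)).
Proof.
have sqrE : \sum_(j < n) (nu j * D i j + sigma * E i 0 * rho j / sqrtn) ^+ 2 =
    \sum_(j < n) nu j ^+ 2 * D i j ^+ 2
    + 2 * sigma * E i 0 / sqrtn * \sum_(j < n) rho j * nu j * D i j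
    + sigma ^+ 2 * E i 0 ^+ 2 / sqrtn ^+ 2 * \sum_(j < n) rho j ^+ 2.
  by rewrite !mulr_sumr -!big_split; apply: eq_bigr => j _ /=; field; pos.
rewrite sqrE /qform; move: sqrtn_sqr sqrtn_gt0; move: (Num.sqrt _) => s s2 s_gt0.
by rewrite -s2; field; pos.
Qed.

Lemma rho_gap : 0 < 1 - (\sum_(j < n) rho j ^+ 2) / n%:R.
Proof. by rewrite subr_gt0 ltr_pdivrMr ?nR_gt0 // mul1r sum_rho2_lt_n. Qed.

Lemma qform_ge0 D E i : 0 <= qform D E i.
Proof.
rewrite qform_sum_sqr; apply: addr_ge0.
  by rewrite divr_ge0 ?sqr_ge0 // ltW //; pos.
apply: mulr_ge0; first by apply: ltW; pos.
apply: addr_ge0; first by apply: sumr_ge0 => j _; exact: sqr_ge0.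
exact: mulr_ge0 (mulr_ge0 (sqr_ge0 _) (sqr_ge0 _)) (ltW rho_gap).
Qed.

Lemma qform_gt0 (D : 'M[R]_n) (E : 'cV[R]_n) i :
  [exists j, D i j != 0] || (E i 0 != 0) -> 0 < qform D E i.
Proof.
move=> DE_neq0; rewrite qform_sum_sqr; apply: ltr_wpDl.
  by rewrite divr_ge0 ?sqr_ge0 // ltW //; pos.
apply: mulr_gt0; first by pos.
have [E0 | E_neq0] := eqVneq (E i 0) 0; last first.
  apply: ltr_wpDl; first by apply: sumr_ge0 => j _; exact: sqr_ge0.
  apply: mulr_gt0; last exact: rho_gap.
  apply: mulr_gt0; first exact: exprn_gt0.
  by rewrite lt0r sqr_ge0 sqrf_eq0 andbT.
move: DE_neq0; rewrite E0 eqxx orbF => /existsP [j D_neq0].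
rewrite expr0n /= !(mul0r, mulr0) addr0 (bigD1 j) //=; apply: ltr_wpDr.
  by apply: sumr_ge0 => k _; exact: sqr_ge0.
by rewrite !mul0r addr0 lt0r sqr_ge0 sqrf_eq0 andbT mulf_neq0 // lt0r_neq0.
Qed.

Lemma sum_qform_gt0 (D : 'M[R]_n) (E : 'cV[R]_n) :
  (D != 0) || (E != 0) -> 0 < \sum_(i < n) qform D E i.
Proof.
move=> DE_neq0; have [i DE_i] : exists i, [exists j, D i j != 0] || (E i 0 != 0).
  case/orP: DE_neq0 => [/matrix0Pn [i [j D_ij]] | /matrix0Pn [i [k E_ik]]]; exists i.
    by apply/orP; left; apply/existsP; exists j.
  by rewrite (ord1 k) in E_ik; rewrite E_ik orbT.
rewrite (bigD1 i) //=; apply: ltr_pwDl; first exact: qform_gt0.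
by apply: sumr_ge0 => k _; exact: qform_ge0.
Qed.

Lemma gobj_lt_star Q S : feasible Q S -> (Q, S) <> (zQ_star, zS_star) ->
  gobj sigma c gam nu rho Q S < gobj sigma c gam nu rho zQ_star zS_star.
Proof.
case=> Q_colsum S_sum QS_neq.
set D := Q - zQ_star; set E := S - zS_star.
have DE_neq0 : (D != 0) || (E != 0).
  rewrite -negb_and; apply: contra_notN QS_neq.
  by case/andP => /eqP/subr0_eq -> /eqP/subr0_eq ->.
have D_colsum j : \sum_(i < n) D i j = 0.
  by under eq_bigr do rewrite 2!mxE; rewrite sumrB Q_colsum zQ_star_colsum subrr.
have E_sum : \sum_(i < n) E i 0 = 0.
  by under eq_bigr do rewrite 2!mxE; rewrite sumrB S_sum sum_zS_star subrr.
have linear_part : \sum_(i < n) (\sum_(j < n) gradQ zQ_star zS_star i j * D i j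
                                 + gradS zQ_star zS_star i * E i 0) = 0.
  have gradQD i : \sum_(j < n) gradQ zQ_star zS_star i j * D i j =
      \sum_(j < n) n%:R * mu_star j * D i j by apply: eq_bigr => j _; rewrite gradQ_star.
  under eq_bigr => i _ do rewrite gradS_star gradQD.
  rewrite big_split /= exchange_big /= -mulr_sumr E_sum mulr0 addr0.
  by apply: big1 => j _; rewrite -mulr_sumr D_colsum mulr0.
have -> : Q = zQ_star + D by rewrite addrC subrK.
have -> : S = zS_star + E by rewrite addrC subrK.
rewrite !gobjE ltr_nM2l ?oppr_lt0 ?divr_gt0 ?nR_gt0 //.
have -> : \sum_(i < n) gsummand (zQ_star + D) (zS_star + E) i =
    \sum_(i < n) gsummand zQ_star zS_star i + \sum_(i < n) qform D E i.
  rewrite -big_split -[RHS]addr0 -[X in _ = _ + X]linear_part -big_split.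
  by apply: eq_bigr => i _ /=; rewrite gsummandD !addrA.
by rewrite ltrDl sum_qform_gt0.
Qed.
End Model.

Theorem mainTheorem8 (R : rcfType) (n : nat) (sigma : R)
    (c gam nu rho : 'I_n -> R)
    (hn : (0 < n)%N) (hsigma : 0 < sigma)
    (hc : forall i, 0 < c i) (hgam : forall i, 0 < gam i)
    (hnu : forall i, 0 < nu i) (hrho : forall i, -1 < rho i < 1) :
  let L := Lmat c gam nu rho in
  let phin := phivec c gam nu rho in
  let IL := (1%:M - L : 'M[R]_n) in
  let u := invmx IL *m Vvec sigma c gam nu rho in
  let v := invmx IL *m Uvec sigma c gam nu rho in
  let theta := - (\sum_(k < n) v k 0) / (\sum_(k < n) u k 0) in
  let zS := theta *: u + v in
  let mu := fun j : 'I_n =>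
      1 / (n%:R * Theta c gam nu j)
        * (1 - zeta c gam nu j
           - sigma / Num.sqrt (n%:R) * acoef c gam nu rho j * zS j 0) in
  let zQ := \matrix_(i < n, j < n)
      (pcoef c gam nu i j
        * (n%:R * mu j + (if i == j then 1 / c i else 0)
           - gam i * sigma / Num.sqrt (n%:R) * zS i 0 * rho j * nu j)) in
  entrywise_nonneg L /\
  (forall k, (L^T *m phin) k 0 < phin k 0) /\
  spectral_radius_lt L 1 /\
  nonsingular_Mmatrix IL /\
  entrywise_nonneg (invmx IL) /\
  \sum_(k < n) u k 0 != 0 /\
  (feasible zQ zS /\
      (forall (zQ' : 'M[R]_n) (zS' : 'cV[R]_n), feasible zQ' zS' ->
         (zQ', zS') <> (zQ, zS) ->
         gobj sigma c gam nu rho zQ' zS' < gobj sigma c gam nu rho zQ zS)).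
Proof.
move=> L phin IL u v theta zS mu zQ.
have L_ge0 := Lmat_ge0 hn hc hgam hnu hrho.
have phin_gt0 := phivec_gt0 hn hc hgam hnu hrho.
have trL_phin_lt := trLmat_phivec_lt hn hc hgam hnu hrho.
split; first exact: L_ge0.
split; first exact: trL_phin_lt.
split; first exact: spectral_radius_lt1 L_ge0 phin_gt0 trL_phin_lt.
split; first exact: IL_Mmatrix L_ge0 phin_gt0 trL_phin_lt.
split; first exact: invmx_IL_ge0 L_ge0 phin_gt0 trL_phin_lt.
split; first by rewrite gt_eqF ?(sum_usol_gt0 hn hsigma hc hgam hnu hrho).
split; first by split=> [j|]; [exact: zQ_star_colsum | exact: sum_zS_star].
by move=> zQ' zS'; exact: gobj_lt_star.
Qed.
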